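(* Given an LDODOSP instance, let $(S^d,T^d)_{d\in\{1,\dots,D\}}$ be feasible period counters. Then: $T^{l_w}=0$ and $S^{D-l_w+1}=S^D$; $T^{d+l_w}\le S^d$ for all $1\le d\le D-l_w$; $S^d\le T^{d+u_w}$ for all $1\le d\le D-u_w$; $S^1=S^{l_o}$ and $T^{D-l_o+1}=T^D$; $S^{d+l_o}-N\le T^d$ for all $1\le d\le D-l_o$; $T^d+N\le S^{d+u_o}$ for all $1\le d\le D-u_o$; $r_l^d\le S^d-T^d\le r_u^d$ for all $1\le d\le D$.
   Context: An instance of the Days On Days Off Scheduling Problem (DODOSP) consists of integers $D\ge 1$ (days), $N\ge 1$ (workers), bounds $l_w,u_w,l_o,u_o,U_w,U_o\in\mathbb{N}$, and for each day $d\in\{1,\dots,D\}$ integers $0\le r_l^d\le r_u^d\le N$. A schedule is a map $f:\{n_1,\dots,n_N\}\times\{1,\dots,D\}\to\{\mathrm{ON},\mathrm{OFF}\}$ (not cyclic). A work period (resp. off period) of a worker is an inclusion-wise maximal set of consecutive days on which the worker is ON (resp. OFF). A schedule is feasible if on every day $d$ the number of workers that are ON lies in $[r_l^d,r_u^d]$, every work period has length between $l_w$ and $u_w$, every off period has length between $l_o$ and $u_o$, every worker is ON on at most $U_w$ days and OFF on at most $U_o$ days. The LDODOSP is the DODOSP restricted to instances with $U_w=U_o=D$. Integers $(S^d,T^d)_{d\in\{1,\dots,D\}}$ are period counters representing a schedule if for each $d$, $S^d$ is the number of work periods (over all workers) whose first day is among days $1,\dots,d$, and $T^d$ is the number of work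 periods whose last day is among days $1,\dots,d-1$. Period counters are feasible (for a given instance) if they represent a feasible schedule of that instance. *)

From mathcomp Require Import all_boot all_order all_algebra.
Set Implicit Arguments. Unset Strict Implicit. Unset Printing Implicit Defensive.

(* An instance of the DODOSP.  Days are 1..D, workers are 'I_N. *)
Record instance := Instance {
  D : nat; N : nat;
  lw : nat; uw : nat; lo : nat; uo : nat;
  Uw : nat; Uo : nat;
  rl : nat -> nat; ru : nat -> nat }.

Definition valid_instance (I : instance) : Prop :=
  [/\ 1 <= D I, 1 <= N I &
      forall d, 1 <= d <= D I -> rl I d <= ru I d <= N I].

Definition LDODOSP (I : instance) : Prop :=
  [/\ valid_instance I, Uw I = D I & Uo I = D I].

(* A schedule: true = ON, false = OFF; only days 1..D are relevant. *)
Definition schedule (I : instance) := 'I_(N I) -> nat -> bool.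

Definition period (I : instance) (f : schedule I) (b : bool) (n : 'I_(N I))
  (s e : nat) : Prop :=
  [/\ 1 <= s <= e, e <= D I,
      (forall d, s <= d <= e -> f n d = b),
      (s == 1) || (f n s.-1 != b)
    & (e == D I) || (f n e.+1 != b)].

Definition work_period I f n s e := @period I f true n s e.
Definition off_period I f n s e := @period I f false n s e.

Definition feasible (I : instance) (f : schedule I) : Prop :=
  [/\ (forall d, 1 <= d <= D I ->
         rl I d <= #|[set n | f n d]| <= ru I d),
      (forall n s e, work_period f n s e -> lw I <= e - s + 1 <= uw I),
      (forall n s e, off_period f n s e -> lo I <= e - s + 1 <= uo I),
      (forall n, count (f n) (iota 1 (D I)) <= Uw I)
    & (forall n, count (fun d => ~~ f n d) (iota 1 (D I)) <= Uo I)].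

Definition is_start (I : instance) (f : schedule I) n (s : nat) : bool :=
  [&& 1 <= s, s <= D I, f n s & (s == 1) || ~~ f n s.-1].
Definition is_end (I : instance) (f : schedule I) n (e : nat) : bool :=
  [&& 1 <= e, e <= D I, f n e & (e == D I) || ~~ f n e.+1].

Definition Scount (I : instance) (f : schedule I) (d : nat) : nat :=
  \sum_(n < N I) count (is_start f n) (iota 1 d).
Definition Tcount (I : instance) (f : schedule I) (d : nat) : nat :=
  \sum_(n < N I) count (is_end f n) (iota 1 d.-1).

Definition represents (I : instance) (S T : nat -> nat) (f : schedule I) :=
  forall d, 1 <= d <= D I -> S d = Scount f d /\ T d = Tcount f d.

Definition feasible_counters (I : instance) (S T : nat -> nat) : Prop :=
  exists f : schedule I, feasible f /\ represents S T f.

From mathcomp Require Import all_boot all_order all_algebra.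
From mathcomp Require Import zify.
Set Implicit Arguments. Unset Strict Implicit. Unset Printing Implicit Defensive.

(* Split the counters by worker: S_n(d) counts the starts of worker n on days
   1..d and T_n(d) its ends on days 1..d-1, so that S_n(d) - T_n(d) is 1 exactly
   when n is ON on day d.  Each inequality holds worker by worker, because a start
   or an end inside a window of lw, uw, lo or uo days is ruled out or forced by the
   length bounds of the work or off period next to it; summing over the workers
   gives the bounds on S and T, with N as the sum of the per-worker slack 1. *)

Lemma count_iota1D (p : pred nat) x k :
  count p (iota 1 (x + k)) = count p (iota 1 x) + count p (iota x.+1 k).
Proof. by rewrite iotaD count_cat add1n. Qed.

Lemma count_iota0 (p : pred nat) a k :
  (forall i, a <= i < a + k -> ~~ p i) -> count p (iota a k) = 0.
Proof.
move=> Np; rewrite (@eq_in_count _ _ pred0) ?count_pred0 // => i.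
by rewrite mem_iota => /Np /negbTE.
Qed.

Lemma count_iota_gt0 (p : pred nat) a k i :
  a <= i < a + k -> p i -> 0 < count p (iota a k).
Proof. by move=> Hi p_i; rewrite -has_count; apply/hasP; exists i; rewrite ?mem_iota. Qed.

Lemma count_iota_le1 (p : pred nat) a k :
  (forall i j, a <= i -> i < j -> j < a + k -> p i -> ~~ p j) ->
  count p (iota a k) <= 1.
Proof.
elim: k a => [|k IHk] a p_once //=.
case pa: (p a) => /=.
- rewrite add1n ltnS leqn0 count_iota0 // => j Hj.
  by apply: (p_once a) => //; lia.
- by rewrite add0n; apply: IHk => i j *; apply: (p_once i) => //; lia.
Qed.

Section Periods.
Variables (I : instance) (f : schedule I) (n : 'I_(N I)).

Lemma run_forward b d : 1 <= d <= D I -> f n d = b ->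
  exists e, [/\ d <= e <= D I, (forall x, d <= x <= e -> f n x = b)
              & (e == D I) || (f n e.+1 != b)].
Proof.
move=> Hd fd; move Ek: (D I - d) => k.
elim: k d Hd fd Ek => [|k IHk] d Hd fd Ek.
  exists d; split=> [| x Hx |]; [lia | by have -> : x = d by lia | ].
  by apply/orP; left; apply/eqP; lia.
case fd1: (f n d.+1 == b); last first.
  exists d; split=> [| x Hx |]; [lia | by have -> : x = d by lia | ].
  by rewrite fd1 orbT.
have [e [He run_e last_e]] := IHk d.+1 ltac:(lia) (eqP fd1) ltac:(lia).
exists e; split=> // [|x Hx]; first lia.
by have [->|] := eqVneq x d; last by move=> ?; apply: run_e; lia.
Qed.

Lemma run_backward b d : 1 <= d -> f n d = b ->
  exists s, [/\ 1 <= s <= d, (forall x, s <= x <= d -> f n x = b)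
              & (s == 1) || (f n s.-1 != b)].
Proof.
elim: d => [|d IHd] // Hd fd.
have [d0|d_gt0] := posnP d.
  by subst d; exists 1; split=> // x Hx; have -> : x = 1 by lia.
case fd0: (f n d == b); last first.
  exists d.+1; split=> [| x Hx |]; [lia | by have -> : x = d.+1 by lia | ].
  by rewrite /= fd0 orbT.
have [s [Hs run_s first_s]] := IHd d_gt0 (eqP fd0).
exists s; split=> // [|x Hx]; first lia.
by have [->|] := eqVneq x d.+1; last by move=> ?; apply: run_s; lia.
Qed.

Lemma period_through b d : 1 <= d <= D I -> f n d = b ->
  exists s e, period f b n s e /\ s <= d <= e.
Proof.
move=> Hd fd.
have [e [He run_e last_e]] := run_forward Hd fd.
have [s [Hs run_s first_s]] := @run_backward b d ltac:(lia) fd.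
exists s, e; split; last lia.
split=> //; try lia.
by move=> x Hx; have [|] := leqP x d => ?; [apply: run_s | apply: run_e]; lia.
Qed.

Lemma work_period_from_start s : is_start f n s -> exists e, work_period f n s e.
Proof.
case/and4P=> s_ge1 s_leD fs first_s.
have [s' [e [[Hse HeD run_se first_s' last_e] Hs]]] := @period_through true s ltac:(lia) fs.
suff Es : s' = s by subst s'; exists e.
case/orP: first_s => [/eqP|/negP fs1]; first lia.
case: (ltnP s' s) => ?; last lia.
by case: fs1; rewrite run_se //; lia.
Qed.

Lemma work_period_to_end e : is_end f n e -> exists s, work_period f n s e.
Proof.
case/and4P=> e_ge1 e_leD fe last_e.
have [s [e' [[Hse HeD run_se first_s last_e'] He]]] := @period_through true e ltac:(lia) fe.
suff Ee : e' = e by subst e'; exists s.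
case/orP: last_e => [/eqP|/negP fe1]; first lia.
case: (ltnP e e') => ?; last lia.
by case: fe1; rewrite run_se //; lia.
Qed.

Lemma off_period_before_start s : is_start f n s -> 1 < s ->
  exists s', off_period f n s' s.-1.
Proof.
case/and4P=> s_ge1 s_leD fs first_s s_gt1.
have fs1 : f n s.-1 = false by case/orP: first_s => [/eqP|/negbTE]; first lia.
have [s' [e [[Hse HeD run_se first_s' last_e] Hs]]] := @period_through false s.-1 ltac:(lia) fs1.
suff Ee : e = s.-1 by subst e; exists s'.
by case: (ltnP s.-1 e) => ?; [rewrite run_se in fs; lia | lia].
Qed.

Lemma off_period_after_end e : is_end f n e -> e < D I ->
  exists e', off_period f n e.+1 e'.
Proof.
case/and4P=> e_ge1 e_leD fe last_e e_ltD.
have fe1 : f n e.+1 = false by case/orP: last_e => [/eqP|/negbTE]; first lia.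
have [s [e' [[Hse HeD run_se first_s last_e'] He]]] := @period_through false e.+1 ltac:(lia) fe1.
suff Es : s = e.+1 by subst s; exists e'.
by case: (ltnP s e.+1) => ?; [rewrite run_se in fe; lia | lia].
Qed.

End Periods.

Definition start_count I (f : schedule I) n x := count (is_start f n) (iota 1 x).
Definition end_count I (f : schedule I) n x := count (is_end f n) (iota 1 x.-1).

Lemma start_countS I (f : schedule I) n x :
  start_count f n x.+1 = start_count f n x + is_start f n x.+1.
Proof. by rewrite /start_count -[x.+1]addn1 count_iota1D /= addn0 addn1. Qed.

Lemma end_countS I (f : schedule I) n x : 0 < x ->
  end_count f n x.+1 = end_count f n x + is_end f n x.
Proof.
by case: x => // x _; rewrite /end_count !succnK -[x.+1]addn1 count_iota1D /= addn0 addn1.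
Qed.

Lemma start_countE I (f : schedule I) n x : 1 <= x <= D I ->
  start_count f n x = end_count f n x + f n x.
Proof.
elim: x => [|x IHx] // Hx.
have [x0|x_gt0] := posnP x.
  by subst x; rewrite /start_count /end_count /= /is_start /=; case: (f n 1); lia.
rewrite start_countS end_countS // IHx; last lia.
rewrite /is_start /is_end.
have -> : (x.+1 == 1) = false by lia.
have -> : (x == D I) = false by lia.
by case: (f n x); case: (f n x.+1); rewrite /= ?andbT; lia.
Qed.

Section PeriodLengths.
Variables (I : instance) (f : schedule I).
Hypothesis work_len : forall n s e, work_period f n s e -> lw I <= e - s + 1 <= uw I.
Hypothesis off_len : forall n s e, off_period f n s e -> lo I <= e - s + 1 <= uo I.

Lemma end_count_lw n : 1 <= lw I -> end_count f n (lw I) = 0.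
Proof.
move=> lw_ge1; apply: count_iota0 => e He; apply/negP => /work_period_to_end [s P].
by have := work_len P; case: P => *; lia.
Qed.

Lemma start_count_tail_lw n : 1 <= lw I <= D I ->
  start_count f n (D I - lw I + 1) = start_count f n (D I).
Proof.
move=> Hlw; have ED : D I = D I - lw I + 1 + (lw I - 1) by lia.
rewrite /start_count [in RHS]ED (count_iota1D _ (D I - lw I + 1)).
rewrite (@count_iota0 _ (D I - lw I + 1).+1) ?addn0 // => s Hs.
apply/negP => /work_period_from_start [e P].
by have := work_len P; case: P => *; lia.
Qed.

Lemma end_count_add_lw_le n d : 1 <= d -> d + lw I <= D I ->
  end_count f n (d + lw I) <= start_count f n d.
Proof.
move=> d_ge1 Hd.
rewrite -(leq_add2r (f n (d + lw I))) -start_countE; last lia.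
rewrite /start_count count_iota1D leq_add2l.
(* the work period starting at s lasts at least lw days *)
have on_after s : d < s <= d + lw I -> is_start f n s ->
    forall x, s <= x <= d + lw I -> f n x.
  move=> Hs /work_period_from_start [e P] x Hx.
  by have := work_len P; case: P => ? _ run _ _ ?; apply: run; lia.
case fdl: (f n (d + lw I)).
- apply: count_iota_le1 => i j Hi Hij Hj Pi.
  have fj1 := on_after i ltac:(lia) Pi j.-1 ltac:(lia).
  by apply/negP; case/and4P=> _ _ _ /orP[/eqP|/negP //]; lia.
- rewrite leqn0 count_iota0 // => s Hs; apply/negP => Ps.
  by have := on_after s ltac:(lia) Ps (d + lw I) ltac:(lia); rewrite fdl.
Qed.

Lemma start_count_le_end_count_add_uw n d : 1 <= d -> d + uw I <= D I ->
  start_count f n d <= end_count f n (d + uw I).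
Proof.
move=> d_ge1 Hd; rewrite start_countE /end_count; last lia.
have -> : (d + uw I).-1 = d.-1 + uw I by lia.
rewrite count_iota1D leq_add2l.
case fd: (f n d) => //.
have [s [e [P Hd_se]]] := period_through (n := n) (b := true) (d := d) ltac:(lia) fd.
have := work_len P; case: P => _ eD run _ last_e ?.
apply: (@count_iota_gt0 _ _ _ e); first lia.
by rewrite /is_start /is_end run ?last_e //; lia.
Qed.

Lemma start_count_head_lo n : 1 <= lo I <= D I ->
  start_count f n 1 = start_count f n (lo I).
Proof.
move=> Hlo; have Elo : lo I = 1 + (lo I - 1) by lia.
rewrite /start_count Elo (count_iota1D _ 1) (@count_iota0 _ 2) ?addn0 // => s Hs.
apply/negP => /off_period_before_start Ps.
by have [s' P] := Ps ltac:(lia); have := off_len P; case: P => *; lia.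
Qed.

Lemma end_count_tail_lo n : 1 <= lo I <= D I ->
  end_count f n (D I - lo I + 1) = end_count f n (D I).
Proof.
move=> Hlo; have ED : (D I).-1 = (D I - lo I + 1).-1 + (lo I - 1) by lia.
rewrite /end_count ED count_iota1D.
rewrite (@count_iota0 _ (D I - lo I + 1).-1.+1) ?addn0 // => e He.
apply/negP => /off_period_after_end Pe.
by have [e' P] := Pe ltac:(lia); have := off_len P; case: P => *; lia.
Qed.

Lemma start_count_add_lo_le n d : 1 <= d -> d + lo I <= D I ->
  start_count f n (d + lo I) <= end_count f n d + 1.
Proof.
move=> d_ge1 Hd.
rewrite /start_count count_iota1D -/(start_count f n d) start_countE; last lia.
rewrite -addnA leq_add2l.
(* the off period ending on day s - 1 lasts at least lo days *)
have off_before s : d < s <= d + lo I -> is_start f n s ->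
    forall x, d <= x < s -> f n x = false.
  move=> Hs Ps x Hx; have [s' P] := off_period_before_start Ps ltac:(lia).
  by have := off_len P; case: P => ? _ run _ _ ?; apply: run; lia.
case fd: (f n d) => /=.
- rewrite count_iota0 // => s Hs; apply/negP => Ps.
  by have := off_before s ltac:(lia) Ps d ltac:(lia); rewrite fd.
- apply: count_iota_le1 => i j Hi Hij Hj Pi; apply/negP => Pj.
  by have := off_before j ltac:(lia) Pj i ltac:(lia); case/and4P: Pi => _ _ ->.
Qed.

Lemma end_count_lt_start_count_add_uo n d : 1 <= d -> d + uo I <= D I ->
  end_count f n d < start_count f n (d + uo I).
Proof.
move=> d_ge1 Hd.
rewrite /start_count count_iota1D -/(start_count f n d) start_countE; last lia.
rewrite -addnA -[(end_count f n d).+1]addn1 leq_add2l.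
case fd: (f n d) => //=.
have [s [e [P Hd_se]]] := period_through (n := n) (b := false) (d := d) ltac:(lia) fd.
have := off_len P; case: P => ? eD run _ /orP last_e ?.
have fe : f n e = false by apply: run; lia.
have fe1 : f n e.+1 by case: last_e => [/eqP|/negPn //]; lia.
apply: (@count_iota_gt0 _ _ _ e.+1); first lia.
by rewrite /is_start fe1 fe orbT; lia.
Qed.

Lemma Tcount_lw : 1 <= lw I -> Tcount f (lw I) = 0.
Proof. by move=> ?; apply: big1 => n _; apply: end_count_lw. Qed.

Lemma Scount_tail_lw : 1 <= lw I <= D I ->
  Scount f (D I - lw I + 1) = Scount f (D I).
Proof. by move=> ?; apply: eq_bigr => n _; apply: start_count_tail_lw. Qed.

Lemma Tcount_add_lw_le d : 1 <= d -> d + lw I <= D I ->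
  Tcount f (d + lw I) <= Scount f d.
Proof. by move=> *; apply: leq_sum => n _; apply: end_count_add_lw_le. Qed.

Lemma Scount_le_Tcount_add_uw d : 1 <= d -> d + uw I <= D I ->
  Scount f d <= Tcount f (d + uw I).
Proof. by move=> *; apply: leq_sum => n _; apply: start_count_le_end_count_add_uw. Qed.

Lemma Scount_head_lo : 1 <= lo I <= D I -> Scount f 1 = Scount f (lo I).
Proof. by move=> ?; apply: eq_bigr => n _; apply: start_count_head_lo. Qed.

Lemma Tcount_tail_lo : 1 <= lo I <= D I ->
  Tcount f (D I - lo I + 1) = Tcount f (D I).
Proof. by move=> ?; apply: eq_bigr => n _; apply: end_count_tail_lo. Qed.

Lemma Scount_add_lo_le d : 1 <= d -> d + lo I <= D I ->
  Scount f (d + lo I) <= Tcount f d + N I.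
Proof.
move=> *; rewrite -[N I]card_ord -sum1_card -big_split /=.
by apply: leq_sum => n _; apply: start_count_add_lo_le.
Qed.

Lemma Tcount_add_uo_le d : 1 <= d -> d + uo I <= D I ->
  Tcount f d + N I <= Scount f (d + uo I).
Proof.
move=> *; rewrite -[N I]card_ord -sum1_card -big_split /=.
by apply: leq_sum => n _; rewrite addn1; apply: end_count_lt_start_count_add_uo.
Qed.

End PeriodLengths.

Lemma Scount_TcountE I (f : schedule I) d : 1 <= d <= D I ->
  Scount f d = Tcount f d + #|[set n | f n d]|.
Proof.
move=> Hd; rewrite /Scount (eq_bigr _ (fun n _ => @start_countE I f n d Hd)) big_split /=.
congr (_ + _); rewrite -sum1dep_card [RHS]big_mkcond.
by apply: eq_bigr => n _; case: (f n d).
Qed.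

Theorem lemma5p6 (I : instance) (S T : nat -> nat) :
  LDODOSP I -> feasible_counters I S T ->
  [/\ (1 <= lw I <= D I -> T (lw I) = 0 /\ S (D I - lw I + 1) = S (D I)),
      (forall d, 1 <= d <= D I - lw I -> T (d + lw I) <= S d),
      (forall d, 1 <= d <= D I - uw I -> S d <= T (d + uw I)),
      (1 <= lo I <= D I -> S 1 = S (lo I) /\ T (D I - lo I + 1) = T (D I))
    & [/\ (forall d, 1 <= d <= D I - lo I ->
             ((S (d + lo I)%N)%:Z - (N I)%:Z <= (T d)%:Z)%R),
          (forall d, 1 <= d <= D I - uo I -> T d + N I <= S (d + uo I))
        & (forall d, 1 <= d <= D I ->
             ((rl I d)%:Z <= (S d)%:Z - (T d)%:Z <= (ru I d)%:Z)%R)]].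
Proof.
move=> _ [f [[demand work_len off_len _ _] rep]].
have RS d : 1 <= d <= D I -> S d = Scount f d by move=> /rep [].
have RT d : 1 <= d <= D I -> T d = Tcount f d by move=> /rep [].
split.
- move=> Hlw; rewrite RT ?RS; try lia.
  by split; [apply: Tcount_lw => //; lia | exact: Scount_tail_lw].
- by move=> d Hd; rewrite RT ?RS; try lia; apply: Tcount_add_lw_le => //; lia.
- by move=> d Hd; rewrite RT ?RS; try lia; apply: Scount_le_Tcount_add_uw => //; lia.
- move=> Hlo; rewrite !RT ?RS; try lia.
  by split; [exact: Scount_head_lo | exact: Tcount_tail_lo].
split.
- move=> d Hd; have : Scount f (d + lo I) <= Tcount f d + N I.
    by apply: Scount_add_lo_le => //; lia.
  by rewrite RT ?RS; lia.
- by move=> d Hd; rewrite RT ?RS; try lia; apply: Tcount_add_uo_le => //; lia.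
- by move=> d Hd; have := demand d Hd; rewrite RS // RT // Scount_TcountE //; lia.
Qed.
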